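(* Let $k$ be a field, $D$ a $k$-algebra, $D[x,y]$ the polynomial algebra in two commuting indeterminates over $D$, $a$ a central element of $D$, and $I$ the ideal of $D[x,y]$ generated by $xy-a$. Then $\operatorname{GKdim}(D[x,y]/I)=\operatorname{GKdim}(D)+1$.
   Context: $\operatorname{GKdim}(B)=\sup_V\limsup_{n\to\infty}\log_n\dim_k(\sum_{i=0}^nV^i)$ over finite-dimensional subspaces $V$ of $B$. In $D[x,y]$ the indeterminates $x,y$ commute with each other and with all elements of $D$. *)

From HB Require Import structures.
From mathcomp Require Import all_boot all_order all_algebra.
From mathcomp Require Import boolp classical_sets reals ereal sequences exp.
Set Implicit Arguments. Unset Strict Implicit. Unset Printing Implicit Defensive.
Import Order.TTheory GRing.Theory Num.Theory.
Local Open Scope ring_scope.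

(* A k-algebra B is presented as a quotient A / I of a ring A by a two-sided
   ideal I, with the k-structure given by a map f : k -> A (scalar c acts
   as multiplication by f c).  For B = A itself take I = {0}. *)
Section GK.
Variables (R : realType) (k : fieldType) (A : nzRingType).
Variables (f : k -> A) (I : A -> Prop).

Definition lin_indep_mod (s : seq A) : Prop :=
  forall c : 'I_(size s) -> k,
    I (\sum_(i < size s) f (c i) * s`_i) -> forall i, c i = 0.

Definition dim_span_mod (s : seq A) : nat :=
  \max_(m : (size s).-tuple bool | `[< lin_indep_mod (mask m s) >])
     size (mask m s).

(* products of exactly i elements of s (i = 0 gives the empty product 1);
   they span V^i when V = span s *)
Fixpoint words (s : seq A) (i : nat) : seq A :=
  if i is i'.+1 then [seq x * y | x <- s, y <- words s i'] else [:: 1].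

Definition words_upto (s : seq A) (n : nat) : seq A :=
  flatten [seq words s i | i <- iota 0 n.+1].

(* log_n dim(sum_{i<=n} V^i), with log 0 = -oo; the values at n = 0, 1
   are irrelevant for the limsup *)
Definition gk_term (s : seq A) (n : nat) : \bar R :=
  let d := dim_span_mod (words_upto s n) in
  if (1 < n)%N then (if d == 0%N then -oo%E else (ln d%:R / ln n%:R)%:E)
  else 0%E.

(* GKdim of A / I: sup over finite-dimensional subspaces V = span (image of s) *)
Definition GKdim_quot : \bar R :=
  ereal_sup [set limn_esup (gk_term s) | s in [set: seq A]].
End GK.

Definition GKdim (R : realType) (k : fieldType) (D : algType k) : \bar R :=
  GKdim_quot R (fun c : k => c%:A : D) (fun z : D => z = 0).

Definition ideal_gen (A : nzRingType) (g : A) : A -> Prop :=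
  fun z => exists ps : seq (A * A), z = \sum_(pq <- ps) pq.1 * g * pq.2.

(* D[x,y] := {poly {poly D}}, with x = 'X%:P (inner variable) and y = 'X *)
Definition polyx (k : fieldType) (D : algType k) : {poly {poly D}} := 'X%:P.
Definition polyy (k : fieldType) (D : algType k) : {poly {poly D}} := 'X.

Definition GKdim_Dxy_mod (R : realType) (k : fieldType) (D : algType k) (a : D)
  : \bar R :=
  GKdim_quot R (fun c : k => (c%:A : D)%:P%:P : {poly {poly D}})
    (ideal_gen (polyx D * polyy D - a%:P%:P)).

From HB Require Import structures.
From mathcomp Require Import all_boot all_order all_algebra.
From mathcomp Require Import boolp classical_sets reals ereal sequences exp.
From mathcomp Require Import lra zify.
Import Order.TTheory GRing.Theory Num.Theory.
Set Implicit Arguments. Unset Strict Implicit. Unset Printing Implicit Defensive.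
Local Open Scope ring_scope.

(* Let V be spanned by a finite family s of D, and W by x and s in
   Q = D[x,y]/(xy - a).  If B is a basis of V^{<=n}, the products b x^i
   (b in B, i < n) lie in W^{<=2n} and are independent in Q: the map
   psi_m (sum_ij p_ij x^i y^j) = sum_j p_(m+j,j) a^j is well defined on Q because
   a is central, and it sends b x^i to b if i = m and to 0 otherwise.  Conversely,
   modulo xy - a every monomial w x^i y^j is congruent to w a^m x^(i-m) y^(j-m)
   with m = min i j; so if W is spanned by finitely many polynomials, W^{<=n} is
   spanned by V'^{<=cn} times the O(n) monomials x^i, y^j, where V' is spanned by
   a and the coefficients.  Both bounds shift the exponent log dim / log n by
   exactly 1. *)

Lemma homogeneous_system_nontrivial (k : fieldType) m n (C : nat -> nat -> k) :
  (n < m)%N -> exists v : nat -> k, (exists2 j, (j < m)%N & v j != 0) /\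
    forall i, (i < n)%N -> \sum_(j < m) v j * C j i = 0.
Proof.
move=> nm; pose M : 'M[k]_(m, n) := \matrix_(j, i) C j i.
have /rowV0Pn [w /sub_kermxP wM w0] : kermx M != 0.
  by rewrite kermx_eq0 /row_free ltn_eqF // (leq_ltn_trans (rank_leq_col M)).
pose v j := if insub j is Some j' then w 0 j' else 0.
have vE (j : 'I_m) : v j = w 0 j by rewrite /v valK.
exists v; split.
  have [j wj] : exists j, w 0 j != 0.
    apply/existsP; apply: contraNT w0; rewrite negb_exists => /forallP w_0.
    by apply/eqP/rowP => j; rewrite mxE; apply/eqP/negPn/w_0.
  by exists j; rewrite ?vE.
move=> i ni; transitivity ((w *m M) 0 (Ordinal ni)); last by rewrite wM mxE.
by rewrite mxE; apply: eq_bigr => j _; rewrite vE mxE.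
Qed.

Section SpanModulo.
Variables (k : fieldType) (A : nzRingType) (f : {rmorphism k -> A}).

Definition lincomb (c : nat -> k) (t : seq A) : A := \sum_(i < size t) f (c i) * t`_i.

Lemma eq_lincomb c c' t : (forall i, (i < size t)%N -> c i = c' i) ->
  lincomb c t = lincomb c' t.
Proof. by move=> cc'; apply: eq_bigr => i _; rewrite cc'. Qed.

Lemma lincomb_cat c t1 t2 :
  lincomb c (t1 ++ t2) = lincomb c t1 + lincomb (fun i => c (size t1 + i)%N) t2.
Proof.
rewrite /lincomb size_cat big_split_ord /=; congr (_ + _); apply: eq_bigr => i _.
  by rewrite nth_cat ltn_ord.
by rewrite nth_cat ltnNge leq_addr addKn.
Qed.

Lemma lincomb_rcons c t x :
  lincomb c (rcons t x) = lincomb c t + f (c (size t)) * x.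
Proof. by rewrite -cats1 lincomb_cat /lincomb big_ord1 addn0. Qed.

Lemma lincomb_scale d c t : f d * lincomb c t = lincomb (fun i => d * c i) t.
Proof. by rewrite mulr_sumr; apply: eq_bigr => i _; rewrite rmorphM mulrA. Qed.

Lemma lincomb_add c c' t :
  lincomb c t + lincomb c' t = lincomb (fun i => c i + c' i) t.
Proof. by rewrite -big_split; apply: eq_bigr => i _; rewrite rmorphD mulrDl. Qed.

Lemma lincomb_mem t x : x \in t -> lincomb (fun i => (i == index x t)%:R) t = x.
Proof.
move=> xt; have ix : (index x t < size t)%N by rewrite index_mem.
rewrite /lincomb (bigD1 (Ordinal ix)) //=.
rewrite eqxx rmorph1 mul1r nth_index // big1 ?addr0 // => i /negbTE ne.
by rewrite -(inj_eq val_inj) /= in ne; rewrite ne rmorph0 mul0r.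
Qed.

Lemma lincomb0 t : lincomb (fun=> 0) t = 0.
Proof. by rewrite /lincomb big1 // => i _; rewrite rmorph0 mul0r. Qed.

Lemma lincomb_nseq0 c n : lincomb c (nseq n 0) = 0.
Proof. by rewrite /lincomb big1 // => i _; rewrite nth_nseq if_same mulr0. Qed.

Lemma lincomb_lincomb (v : nat -> k) (C : nat -> nat -> k) (t s : seq A) :
  \sum_(j < size t) f (v j) * lincomb (C j) s =
  lincomb (fun i => \sum_(j < size t) v j * C j i) s.
Proof.
under eq_bigr do rewrite /lincomb mulr_sumr.
rewrite exchange_big; apply: eq_bigr => i _.
by rewrite rmorph_sum mulr_suml; apply: eq_bigr => j _; rewrite rmorphM mulrA.
Qed.

Variable I : A -> Prop.
Hypotheses (I0 : I 0) (I_lin : forall c x y, I x -> I y -> I (f c * x + y)).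

Lemma I_add x y : I x -> I y -> I (x + y).
Proof. by rewrite -{2}[x]mul1r -(rmorph1 f); apply: I_lin. Qed.

Lemma I_scale c x : I x -> I (f c * x).
Proof. by move=> Ix; rewrite -[_ * _]addr0; apply: I_lin. Qed.

Lemma I_sum (J : Type) (r : seq J) (P : pred J) (F : J -> A) :
  (forall j, P j -> I (F j)) -> I (\sum_(j <- r | P j) F j).
Proof. by apply: big_ind => //; exact: I_add. Qed.

Definition span_mod (t : seq A) (z : A) : Prop := exists c, I (z - lincomb c t).

Definition free_mod (t : seq A) : Prop :=
  forall c, I (lincomb c t) -> forall i, (i < size t)%N -> c i = 0.

Lemma span_mod_eqmod t z z' : I (z - z') -> span_mod t z' -> span_mod t z.
Proof. by move=> Iz [c Ic]; exists c; rewrite -(subrK z' z) -addrA; apply: I_add. Qed.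

Lemma span_mod0 t : span_mod t 0.
Proof. by exists (fun=> 0); rewrite lincomb0 subr0. Qed.

Lemma span_modD t z z' : span_mod t z -> span_mod t z' -> span_mod t (z + z').
Proof.
move=> [c Ic] [c' Ic']; exists (fun i => c i + c' i).
by rewrite -lincomb_add opprD addrACA; apply: I_add.
Qed.

Lemma span_modZ t d z : span_mod t z -> span_mod t (f d * z).
Proof.
move=> [c Ic]; exists (fun i => d * c i).
by rewrite -lincomb_scale -mulrBr; apply: I_scale.
Qed.

Lemma span_mod_sum t (J : Type) (r : seq J) (P : pred J) (F : J -> A) :
  (forall j, P j -> span_mod t (F j)) -> span_mod t (\sum_(j <- r | P j) F j).
Proof. by apply: big_ind; [exact: span_mod0 | exact: span_modD]. Qed.

Lemma span_mod_lincomb c t : span_mod t (lincomb c t).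
Proof. by exists c; rewrite subrr. Qed.

Lemma span_mod_mem t z : z \in t -> span_mod t z.
Proof. by move=> zt; exists (fun i => (i == index z t)%:R); rewrite lincomb_mem // subrr. Qed.

Lemma span_mod_trans s t z :
  (forall y, y \in t -> span_mod s y) -> span_mod t z -> span_mod s z.
Proof.
move=> ts [c Ic]; apply: span_mod_eqmod Ic _.
by apply: span_mod_sum => i _; apply/span_modZ/ts/mem_nth.
Qed.

Lemma span_mod_rcons t x z : span_mod t z -> span_mod (rcons t x) z.
Proof.
move=> [c Ic]; exists (fun i => if (i < size t)%N then c i else 0).
rewrite lincomb_rcons ltnn rmorph0 mul0r addr0.
by rewrite (@eq_lincomb _ c) // => i ->.
Qed.

Lemma free_mod_rcons t x : free_mod t -> ~ span_mod t x -> free_mod (rcons t x).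
Proof.
move=> free_t xNt c; rewrite lincomb_rcons => Ic.
have cx0 : c (size t) = 0.
  apply: contra_notP xNt => /eqP cx.
  exists (fun i => - (c (size t))^-1 * c i).
  have -> : x - lincomb (fun i => - (c (size t))^-1 * c i) t =
      f (c (size t))^-1 * (lincomb c t + f (c (size t)) * x).
    by rewrite -lincomb_scale rmorphN mulNr opprK mulrDr mulrA -rmorphM mulVf //
      rmorph1 mul1r addrC.
  exact: I_scale.
move=> i; rewrite size_rcons ltnS leq_eqVlt => /predU1P [-> //|].
by apply: free_t; rewrite cx0 rmorph0 mul0r addr0 in Ic.
Qed.

Lemma free_mod_size_le t s :
  free_mod t -> (forall y, y \in t -> span_mod s y) -> (size t <= size s)%N.
Proof.
move=> free_t ts; rewrite leqNgt; apply/negP => st.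
have /choice [C tC] : forall j, exists c, (j < size t)%N -> I (t`_j - lincomb c s).
  move=> j; case: (ltnP j (size t)) => jt; last by exists (fun=> 0).
  by have [c Ic] := ts _ (mem_nth 0 jt); exists c.
have [v [[j jt vj] vC]] := homogeneous_system_nontrivial C st.
suff /free_t/(_ j jt)/eqP : I (lincomb v t) by rewrite (negbTE vj).
have -> : lincomb v t = \sum_(j < size t) f (v j) * (t`_j - lincomb (C j) s) +
    lincomb (fun i => \sum_(j < size t) v j * C j i) s.
  by rewrite -lincomb_lincomb -big_split; apply: eq_bigr => i _ /=; rewrite -mulrDr subrK.
rewrite [X in _ + X](@eq_lincomb _ (fun=> 0)) // lincomb0 addr0.
by apply: I_sum => i _; apply/I_scale/tC.
Qed.

Lemma exists_free_mask s : exists m : seq bool,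
  [/\ size m = size s, free_mod (mask m s) & forall z, z \in s -> span_mod (mask m s) z].
Proof.
elim/last_ind: s => [|s x [m [sm free_m sm_span]]].
  by exists [::]; split => // c _ i.
have [x_span|xN_span] := pselect (span_mod (mask m s) x).
  exists (rcons m false); rewrite mask_rcons // cats0 !size_rcons sm; split => // z.
  by rewrite mem_rcons inE => /predU1P [-> //|]; exact: sm_span.
exists (rcons m true); rewrite mask_rcons // cats1 !size_rcons sm; split => //.
  exact: free_mod_rcons.
move=> z; rewrite mem_rcons inE => /predU1P [->|zs].
  by apply: span_mod_mem; rewrite mem_rcons mem_head.
exact/span_mod_rcons/sm_span.
Qed.

Lemma lin_indep_modP t : lin_indep_mod f I t <-> free_mod t.
Proof.
split=> [t_indep c Ic i it | free_t c Ic i].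
  exact: (t_indep (fun j => c j) Ic (Ordinal it)).
pose c' j := if insub j is Some j' then c j' else 0.
have c'E (j : 'I_(size t)) : c' j = c j by rewrite /c' valK.
rewrite -c'E; apply: free_t (ltn_ord i).
by rewrite /lincomb; under eq_bigr do rewrite c'E.
Qed.

Lemma dim_span_modP s : exists B, [/\ free_mod B, size B = dim_span_mod f I s,
  {subset B <= s} & forall z, z \in s -> span_mod B z].
Proof.
have [m [sm free_m s_span]] := exists_free_mask s.
exists (mask m s); split => //; last by move=> z /mem_mask.
apply/eqP; rewrite eqn_leq; apply/andP; split.
  have sm' : size m == size s by rewrite sm.
  apply: (@leq_bigmax_cond _ (fun m' : (size s).-tuple bool =>
    `[< lin_indep_mod f I (mask m' s) >]) (fun m' => size (mask m' s)) (Tuple sm')).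
  exact/asboolP/lin_indep_modP.
apply/bigmax_leqP => m' /asboolP/lin_indep_modP free_m'.
by apply: free_mod_size_le => // y /mem_mask; exact: s_span.
Qed.

Lemma dim_span_mod_ge t s : free_mod t -> (forall y, y \in t -> span_mod s y) ->
  (size t <= dim_span_mod f I s)%N.
Proof.
move=> free_t ts; have [B [_ <- _ sB]] := dim_span_modP s.
by apply: free_mod_size_le => // y /ts; apply: span_mod_trans.
Qed.

Lemma dim_span_mod_le s t : (forall y, y \in s -> span_mod t y) ->
  (dim_span_mod f I s <= size t)%N.
Proof.
move=> st; have [B [free_B <- Bs _]] := dim_span_modP s.
by apply: free_mod_size_le => // y /Bs; exact: st.
Qed.

Lemma free_mod_cat t1 t2 : free_mod t1 ->
  (forall c1 c2, I (lincomb c1 t1 + lincomb c2 t2) ->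
     forall i, (i < size t2)%N -> c2 i = 0) ->
  free_mod (t1 ++ t2).
Proof.
move=> free_t1 t2_free c; rewrite lincomb_cat => Ic.
have c2_0 := t2_free _ _ Ic.
move=> i; rewrite size_cat => it; case: (ltnP i (size t1)) => it1.
  apply: free_t1 it1; move: Ic; rewrite (@eq_lincomb _ (fun=> 0) t2) //.
  by rewrite lincomb0 addr0.
by rewrite -(subnKC it1); apply: c2_0; rewrite -(ltn_add2l (size t1)) subnKC.
Qed.

End SpanModulo.

Section Words.
Variable A : nzRingType.
Implicit Types (s : seq A) (z : A).

Lemma wordsSP s l z :
  reflect (exists x y, [/\ x \in s, y \in words s l & z = x * y]) (z \in words s l.+1).
Proof.
apply: (iffP allpairsP) => [[[x y] [/= xs yw ->]]|[x [y [xs yw ->]]]]; first by exists x, y.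
by exists (x, y).
Qed.

Lemma mem_wordsS s l x y : x \in s -> y \in words s l -> x * y \in words s l.+1.
Proof. by move=> xs yw; apply/wordsSP; exists x, y. Qed.

Lemma mem_wordsM s l1 l2 x y : x \in words s l1 -> y \in words s l2 ->
  x * y \in words s (l1 + l2).
Proof.
elim: l1 x => [|l1 IH] x; first by rewrite inE => /eqP -> yw; rewrite mul1r.
by move=> /wordsSP [u [v [us vw ->]]] yw; rewrite -mulrA; apply/mem_wordsS/IH.
Qed.

Lemma mem_wordsX s x m : x \in s -> x ^+ m \in words s m.
Proof.
move=> xs; elim: m => [|m IH]; first by rewrite expr0 inE.
by rewrite exprS; apply: mem_wordsS.
Qed.

Lemma words_subset s1 s2 l : {subset s1 <= s2} -> {subset words s1 l <= words s2 l}.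
Proof.
move=> s12; elim: l => [//|l IH] z /wordsSP [x [y [xs yw ->]]].
by apply: mem_wordsS; [apply: s12 | apply: IH].
Qed.

Lemma words_uptoP s n z :
  reflect (exists2 l, (l <= n)%N & z \in words s l) (z \in words_upto s n).
Proof.
apply: (iffP flatten_mapP) => [[l]|[l ln zw]].
  by rewrite mem_iota add0n ltnS; exists l.
by exists l; rewrite // mem_iota add0n ltnS.
Qed.

Lemma mem_words_upto s n l z : (l <= n)%N -> z \in words s l -> z \in words_upto s n.
Proof. by move=> ln zw; apply/words_uptoP; exists l. Qed.

End Words.

Lemma map_words (A B : nzRingType) (h : {rmorphism A -> B}) s l z :
  z \in words s l -> h z \in words (map h s) l.
Proof.
elim: l z => [|l IH] z; first by rewrite inE => /eqP ->; rewrite rmorph1 inE.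
by move=> /wordsSP [x [y [xs yw ->]]]; rewrite rmorphM; apply/mem_wordsS/IH/yw/map_f.
Qed.

Section IdealGen.
Variables (A : nzRingType) (g : A).

Lemma ideal_gen_id : ideal_gen g g.
Proof. by exists [:: (1, 1)]; rewrite big_seq1 mul1r mulr1. Qed.

Lemma ideal_gen0 : ideal_gen g 0.
Proof. by exists [::]; rewrite big_nil. Qed.

Lemma ideal_genD x y : ideal_gen g x -> ideal_gen g y -> ideal_gen g (x + y).
Proof. by move=> [p ->] [q ->]; exists (p ++ q); rewrite big_cat. Qed.

Lemma ideal_genMl q x : ideal_gen g x -> ideal_gen g (q * x).
Proof.
move=> [p ->]; exists [seq (q * uv.1, uv.2) | uv <- p].
by rewrite big_map mulr_sumr; apply: eq_bigr => uv _; rewrite !mulrA.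
Qed.

Lemma ideal_genMr q x : ideal_gen g x -> ideal_gen g (x * q).
Proof.
move=> [p ->]; exists [seq (uv.1, uv.2 * q) | uv <- p].
by rewrite big_map mulr_suml; apply: eq_bigr => uv _; rewrite !mulrA.
Qed.

Lemma ideal_gen_lin (k : Type) (f : k -> A) c x y :
  ideal_gen g x -> ideal_gen g y -> ideal_gen g (f c * x + y).
Proof. by move=> gx gy; apply/ideal_genD/gy/ideal_genMl. Qed.

Lemma ideal_gen_central z : (forall q, GRing.comm g q) ->
  ideal_gen g z -> exists h, z = h * g.
Proof.
move=> g_comm [p ->]; exists (\sum_(uv <- p) uv.1 * uv.2).
by rewrite mulr_suml; apply: eq_bigr => uv _; rewrite -mulrA g_comm mulrA.
Qed.

End IdealGen.

Lemma ideal_gen_subX (A : nzRingType) (u v : A) m :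
  ideal_gen (u - v) (u ^+ m - v ^+ m).
Proof.
elim: m => [|m IH]; first by rewrite !expr0 subrr; exact: ideal_gen0.
have -> : u ^+ m.+1 - v ^+ m.+1 = u * (u ^+ m - v ^+ m) + (u - v) * v ^+ m.
  by rewrite !exprS mulrBr mulrBl addrA subrK.
by apply/ideal_genD/ideal_genMr/ideal_gen_id/ideal_genMl.
Qed.

Lemma eq0_lin (k : Type) (A : nzRingType) (f : k -> A) c (x y : A) :
  x = 0 -> y = 0 -> f c * x + y = 0.
Proof. by move=> -> ->; rewrite mulr0 addr0. Qed.

Lemma commr_polyC_all (R : nzRingType) (c : R) :
  (forall d, GRing.comm c d) -> forall p : {poly R}, GRing.comm c%:P p.
Proof. by move=> c_comm p; apply/polyP => i; rewrite coefCM coefMC c_comm. Qed.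

Lemma poly_expand (R : nzRingType) (p : {poly R}) :
  p = \sum_(i < size p) (p`_i)%:P * 'X^i.
Proof. by rewrite -[p in LHS]coefK poly_def; apply: eq_bigr => i _; rewrite mul_polyC. Qed.

Definition sum_of (A : nzRingType) (S : A -> Prop) (z : A) : Prop :=
  exists2 zs : seq A, (forall u, u \in zs -> S u) & z = \sum_(u <- zs) u.

Section SumOf.
Variable A : nzRingType.
Implicit Types S : A -> Prop.

Lemma sum_of_id S u : S u -> sum_of S u.
Proof. by exists [:: u]; rewrite ?big_seq1 // => v /[!inE] /eqP ->. Qed.

Lemma sum_ofD S x y : sum_of S x -> sum_of S y -> sum_of S (x + y).
Proof.
move=> [xs xsS ->] [ys ysS ->]; exists (xs ++ ys); rewrite ?big_cat // => u.
by rewrite mem_cat => /orP [/xsS|/ysS].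
Qed.

Lemma sum_of_sum S (J : Type) (r : seq J) (P : pred J) (F : J -> A) :
  (forall j, P j -> sum_of S (F j)) -> sum_of S (\sum_(j <- r | P j) F j).
Proof. by apply: big_ind; [exists [::]; rewrite ?big_nil | exact: sum_ofD]. Qed.

Lemma sum_ofM S1 S2 S3 x y : sum_of S1 x -> sum_of S2 y ->
  (forall u v, S1 u -> S2 v -> S3 (u * v)) -> sum_of S3 (x * y).
Proof.
move=> [xs xsS ->] [ys ysS ->] S123; rewrite mulr_suml big_seq.
apply: sum_of_sum => u /xsS xsu; rewrite mulr_sumr big_seq.
by apply: sum_of_sum => v /ysS ysv; apply/sum_of_id/S123.
Qed.

End SumOf.

Section ExtendedReals.
Variable R : realType.
Local Open Scope classical_set_scope.
Local Open Scope ereal_scope.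
Implicit Types (u : nat -> \bar R) (x y : \bar R).

Lemma limn_esup_le u x :
  (exists N, forall n, (N <= n)%N -> u n <= x) -> limn_esup u <= x.
Proof.
move=> [N uNx]; rewrite /limn_esup ereal_normedtype.limf_esupE.
apply: (@le_trans _ _ (ereal_sup [set u n | n in [set n | (N <= n)%N]])).
  by apply: ereal_inf_lbound; exists [set n | (N <= n)%N] => //; exists N.
by apply: ge_ereal_sup => _ [n /= Nn <-]; apply: uNx.
Qed.

Lemma limn_esup_ge u x :
  (forall N, exists2 n, (N <= n)%N & x <= u n) -> x <= limn_esup u.
Proof.
move=> xu; rewrite /limn_esup ereal_normedtype.limf_esupE.
apply: le_ereal_inf_tmp => _ [V [N _ NV] <-].
have [n Nn xun] := xu N; apply: le_trans xun _.
by apply: ereal_sup_ubound; exists n => //; exact: NV.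
Qed.

Lemma limn_esup_lt u y : limn_esup u < y -> exists N, forall n, (N <= n)%N -> u n < y.
Proof.
rewrite /limn_esup ereal_normedtype.limf_esupE => /ereal_inf_lt [_ [V [N _ NV] <-]] Vy.
exists N => n Nn; apply: le_lt_trans Vy; apply: ereal_sup_ubound.
by exists n => //; exact: NV.
Qed.

Lemma lt_limn_esup u y : y < limn_esup u -> forall N, exists2 n, (N <= n)%N & y < u n.
Proof.
move=> yu N; apply: contrapT => yNu; move: yu; apply/negP; rewrite -leNgt.
apply: limn_esup_le; exists N => n Nn; rewrite leNgt; apply/negP => yun.
by apply: yNu; exists n.
Qed.

Lemma adde_le_approx x y (c : R) :
  (forall r e : R, r%:E < x -> (0 < e)%R -> (r + c - e)%:E <= y) -> x + c%:E <= y.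
Proof.
case: x => [l| |] xy; last by rewrite addNye leNye.
  apply/lee_subgt0Pr => e e0; apply: (le_trans _ (xy (l - e / 2)%R (e / 2)%R _ _)).
  - by rewrite -EFinD lee_fin; lra.
  - by rewrite (@lte_fin R); lra.
  - by lra.
suff -> : y = +oo by rewrite leey.
apply: eq_infty => r; apply: le_trans (xy (r - c + 1)%R 1%R (ltry _) ltr01).
by rewrite lee_fin; lra.
Qed.

Lemma le_adde_approx x y (c : R) :
  (forall r e : R, x < r%:E -> (0 < e)%R -> y <= (r + c + e)%:E) -> y <= x + c%:E.
Proof.
case: x => [l| |] xy.
- apply/lee_addgt0Pr => e e0; apply: (le_trans (xy (l + e / 2)%R (e / 2)%R _ _)).
  + by rewrite (@lte_fin R); lra.
  + by lra.
  + by rewrite -!EFinD lee_fin; lra.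
- by rewrite addye // leey.
suff -> : y = -oo by rewrite leNye.
apply: eq_ninfty => r; apply: (le_trans (xy (r - c - 1)%R 1%R (ltNyr _) ltr01)).
by rewrite lee_fin; lra.
Qed.

Lemma ereal_sup_range_adde (T : Type) (F : T -> \bar R) (c : R) :
  ereal_sup (range F) + c%:E = ereal_sup (range (fun t => F t + c%:E)).
Proof.
apply/eqP; rewrite eq_le; apply/andP; split.
  rewrite -leeBrDr //; apply: ge_ereal_sup => _ [t _ <-].
  by rewrite leeBrDr //; apply: ereal_sup_ubound; exists t.
by apply: ge_ereal_sup => _ [t _ <-]; apply/leeD2r/ereal_sup_ubound; exists t.
Qed.

Lemma ereal_sup_le_range (T U : Type) (F : T -> \bar R) (G : U -> \bar R) :
  (forall t, exists v, F t <= G v) -> ereal_sup (range F) <= ereal_sup (range G).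
Proof.
move=> FG; apply: ge_ereal_sup => _ [t _ <-]; have [v FGv] := FG t.
by apply: le_trans FGv _; apply: ereal_sup_ubound; exists v.
Qed.

End ExtendedReals.

Section GrowthExponent.
Variable R : realType.
Local Notation lnn n := (ln (n%:R : R)).

Lemma ln_nat_gt0 n : (1 < n)%N -> 0 < lnn n.
Proof. by move=> n1; apply: ln_gt0; rewrite ltr1n. Qed.

Lemma ln_nat_ge0 n : 0 <= lnn n.
Proof. by case: n => [|n]; [rewrite ln0 | apply: ln_ge0; rewrite ler1n]. Qed.

Lemma ln_natM m n : (0 < m)%N -> (0 < n)%N ->
  lnn (m * n) = lnn m + lnn n.
Proof. by move=> m0 n0; rewrite natrM lnM // posrE ltr0n. Qed.

Lemma ler_ln_nat m n : (0 < m)%N -> (m <= n)%N -> lnn m <= lnn n.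
Proof. by move=> m0 mn; rewrite ler_ln ?posrE ?ltr0n ?ler_nat // (leq_trans m0). Qed.

Lemma ln_nat_unbounded (M : R) : exists N, forall n, (N <= n)%N -> M <= lnn n.
Proof.
have eM0 : 0 <= expR M by exact/ltW/expR_gt0.
exists (Num.Def.archi_bound (expR M)) => n Nn.
have eMn : expR M < n%:R by apply: lt_le_trans (archi_boundP eM0) _; rewrite ler_nat.
by rewrite -(expRK M) ler_ln ?posrE ?expR_gt0 ?(lt_trans (expR_gt0 M)) // ltW.
Qed.

(* [gk_term R f I s] unfolds to [gk_ratio (fun n => dim_span_mod f I (words_upto s n))]. *)
Definition gk_ratio (d : nat -> nat) (n : nat) : \bar R :=
  if (1 < n)%N then (if d n == 0%N then -oo%E else (lnn (d n) / lnn n)%:E) else 0%E.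

Lemma gk_ratioE d n : (1 < n)%N -> (0 < d n)%N ->
  gk_ratio d n = (lnn (d n) / lnn n)%:E.
Proof. by rewrite /gk_ratio => -> /lt0n_neq0 /negbTE ->. Qed.

Lemma limn_esup_gk_ratio_ge (a b : nat -> nat) c : (0 < c)%N ->
  (forall n, 0 < a n)%N -> (forall n, n * a n <= b (c * n))%N ->
  (limn_esup (gk_ratio a) + 1%:E <= limn_esup (gk_ratio b))%E.
Proof.
move=> c0 a0 ab; apply: adde_le_approx => r e ra e0; apply: limn_esup_ge => N.
have [N1 N1P] := ln_nat_unbounded ((r + 1) * lnn c / e).
have [n Nn rn] := lt_limn_esup ra (maxn N (maxn N1 2)).
have [nN nN1 n1] : [/\ (N <= n)%N, (N1 <= n)%N & (1 < n)%N] by split; lia.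
have cn1 : (1 < c * n)%N by nia.
exists (c * n)%N; first by nia.
have Ln0 := ln_nat_gt0 n1; have Lc0 := ln_nat_ge0 c.
have eL : (r + 1) * lnn c <= e * lnn n by rewrite -ler_pdivrMl // mulrC N1P.
have rA : r * lnn n < lnn (a n) by move: rn; rewrite gk_ratioE // (@lte_fin R) ltr_pdivlMr.
have AB : lnn n + lnn (a n) <= lnn (b (c * n)%N).
  by rewrite -ln_natM ?(ltnW n1) //; apply: (ler_ln_nat _ (ab n)); rewrite muln_gt0 (ltnW n1) a0.
have bcn0 : (0 < b (c * n))%N by apply: leq_trans (ab n); rewrite muln_gt0 (ltnW n1) a0.
rewrite gk_ratioE // (@lee_fin R) ler_pdivlMr ?ln_nat_gt0 // ln_natM ?(ltnW n1) //.
(* ln b(cn) >= ln n + ln a(n) > (r + 1) ln n >= (r + 1 - e) (ln c + ln n) *)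
nra.
Qed.

Lemma limn_esup_gk_ratio_le (a b : nat -> nat) c C : (0 < c)%N -> (0 < C)%N ->
  (forall n, 0 < n -> b n <= a (c * n) * (C * n))%N ->
  (limn_esup (gk_ratio b) <= limn_esup (gk_ratio a) + 1%:E)%E.
Proof.
move=> c0 C0 ab; apply: le_adde_approx => r e ar e0.
have [N0 N0P] := limn_esup_lt ar.
have [N1 N1P] := ln_nat_unbounded ((r * lnn c + lnn C) / e).
apply: limn_esup_le; exists (maxn (maxn N0 N1) 2) => n Nn.
have [nN0 nN1 n1] : [/\ (N0 <= n)%N, (N1 <= n)%N & (1 < n)%N] by split; lia.
have [bn|bn0] := posnP (b n); first by rewrite /gk_ratio n1 bn eqxx leNye.
have bnle := ab n (ltnW n1).
have acn0 : (0 < a (c * n))%N by move: bn0 bnle; case: (a _) => //; rewrite mul0n; lia.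
have cn1 : (1 < c * n)%N by nia.
have Ln0 := ln_nat_gt0 n1.
have eL : r * lnn c + lnn C <= e * lnn n by rewrite -ler_pdivrMl // mulrC N1P.
have Ar : lnn (a (c * n)%N) < r * (lnn c + lnn n).
  by move: (N0P _ (leq_trans nN0 (leq_pmull _ c0))); rewrite gk_ratioE // (@lte_fin R)
    ltr_pdivrMr ?ln_nat_gt0 // ln_natM ?(ltnW n1) // mulrC.
have BA : lnn (b n) <= lnn (a (c * n)%N) + (lnn C + lnn n).
  by rewrite -!ln_natM ?muln_gt0 ?C0 ?(ltnW n1) //; apply: ler_ln_nat.
rewrite gk_ratioE // (@lee_fin R) ler_pdivrMr //.
(* ln b(n) <= ln a(cn) + ln C + ln n < r ln c + ln C + (r + 1) ln n <= (r + 1 + e) ln n *)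
nra.
Qed.

End GrowthExponent.

Section QuotientXY.
Variables (k : fieldType) (D : algType k) (a : D).
Hypothesis a_central : forall d : D, GRing.comm a d.

Local Notation PP := {poly {poly D}}.
Local Notation fD := (in_alg D : {rmorphism k -> D}).
Local Notation fQ := (polyC \o polyC \o in_alg D : {rmorphism k -> PP}).
Local Notation ID := (fun z : D => z = 0).
Local Notation g := (polyx D * polyy D - a%:P%:P).
Local Notation IQ := (ideal_gen g).

Lemma polyx_comm (q : PP) : GRing.comm (polyx D) q.
Proof. by apply: commr_polyC_all => p; apply/esym/commr_polyX. Qed.

Lemma polyy_comm (q : PP) : GRing.comm (polyy D) q.
Proof. exact/esym/commr_polyX. Qed.

Lemma a_polyCC_comm (q : PP) : GRing.comm a%:P%:P q.
Proof. by apply/commr_polyC_all/commr_polyC_all. Qed.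

Lemma g_comm (q : PP) : GRing.comm g q.
Proof.
apply/commr_sym/commrB; last exact/commr_sym/a_polyCC_comm.
by apply/commrM; apply/commr_sym; [exact: polyx_comm | exact: polyy_comm].
Qed.

(* [(p`_j)`_i] is the coefficient of x^i y^j. *)
Definition psi (m : nat) (p : PP) : D := \sum_(j < size p) (p`_j)`_(m + j) * a ^+ j.

Lemma psi_widen m (p : PP) n : (size p <= n)%N ->
  psi m p = \sum_(j < n) (p`_j)`_(m + j) * a ^+ j.
Proof.
move=> pn; rewrite /psi (big_ord_widen _ (fun j => (p`_j)`_(m + j) * a ^+ j) pn).
rewrite big_mkcond; apply: eq_bigr => j _; case: ltnP => // /(nth_default 0) ->.
by rewrite coef0 mul0r.
Qed.

Lemma psiD m : {morph psi m : p q / p + q}.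
Proof.
move=> p q; set n := maxn (size p) (size q).
rewrite !(@psi_widen m _ n) ?leq_maxl ?leq_maxr ?size_polyD // -big_split.
by apply: eq_bigr => j _; rewrite !coefD mulrDl.
Qed.

Lemma psi0 m : psi m 0 = 0.
Proof. by rewrite /psi size_poly0 big_ord0. Qed.

Lemma psiCl m d p : psi m (d%:P%:P * p) = d * psi m p.
Proof.
rewrite (@psi_widen m _ (size p)) ?mul_polyC ?size_scale_leq // /psi mulr_sumr.
by apply: eq_bigr => j _; rewrite coefZ coefCM mulrA.
Qed.

Lemma psiC m q : psi m q%:P = q`_m.
Proof.
by rewrite (@psi_widen m _ 1) ?size_polyC ?leq_b1 // big_ord1 coefC addn0 mulr1.
Qed.

Lemma psi_lincomb m c t :
  psi m (lincomb fQ c t) = lincomb fD c (map (psi m) t).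
Proof.
rewrite /lincomb size_map (big_morph _ (psiD m) (psi0 m)).
by apply: eq_bigr => i _; rewrite psiCl (nth_map 0).
Qed.

Lemma psi_mulg m h : psi m (h * g) = 0.
Proof.
pose w j := if j is j'.+1 then (h`_j')`_(m + j') * a ^+ j else 0.
have hg_coef j : ((h * g)`_j)`_(m + j) * a ^+ j = - w j.+1 - - w j.
  rewrite mulrBr mulrA coefB coefMX !coefMC coefB coefMC mulrBl -mulrA -exprS.
  case: j => [|j] /=; first by rewrite coef0 mul0r sub0r oppr0 subr0.
  by rewrite coefMX addnS /= opprK addrC.
have size_g : (size g <= 2)%N.
  rewrite /polyx /polyy -polyCN size_MXaddC; case: ifP => // _.
  exact: size_polyC_leq1.
rewrite (@psi_widen m _ (size h).+1); last first.
  apply: leq_trans (size_polyMleq _ _) _.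
  by rewrite -subn1 leq_subLR add1n -addn2 leq_add2l.
rewrite -(big_mkord xpredT (fun j => ((h * g)`_j)`_(m + j) * a ^+ j)).
rewrite (telescope_sumr_eq (fun j => - w j) _ (leq0n _) (fun j _ => hg_coef j)).
by rewrite /w (nth_default 0 (leqnn (size h))) coef0 mul0r oppr0 subrr.
Qed.

Lemma psi_ideal m z : IQ z -> psi m z = 0.
Proof. by move=> /(ideal_gen_central g_comm) [h ->]; apply: psi_mulg. Qed.

Lemma psi_monomial m b i :
  psi m (b%:P%:P * polyx D ^+ i) = if m == i then b else 0.
Proof.
rewrite psiCl /polyx -rmorphXn psiC coefXn eq_sym.
by case: eqP; rewrite ?mulr1 ?mulr0.
Qed.

Local Notation ID0 := (erefl (0 : D)).
Local Notation ID_lin := (@eq0_lin _ _ fD).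
Local Notation IQ0 := (ideal_gen0 g).
Local Notation IQ_lin := (@ideal_gen_lin _ g _ fQ).

Lemma dim_words_upto_gt0 s n : (0 < dim_span_mod fD ID (words_upto s n))%N.
Proof.
apply: (dim_span_mod_ge ID0 ID_lin (t := [:: 1])).
  move=> c; rewrite /lincomb big_ord1 mulr1 => /eqP.
  by rewrite scaler_eq0 oner_eq0 orbF => /eqP c0 i; rewrite ltnS leqn0 => /eqP ->.
move=> _ /[!inE] /eqP ->; apply: (span_mod_mem _ ID0).
by apply: (mem_words_upto (l := 0)); rewrite ?inE.
Qed.

Definition blocks (B : seq D) n : seq PP :=
  flatten [seq [seq b%:P%:P * polyx D ^+ i | b <- B] | i <- iota 0 n].

Lemma blocksS B n :
  blocks B n.+1 = blocks B n ++ [seq b%:P%:P * polyx D ^+ n | b <- B].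
Proof. by rewrite /blocks -addn1 iotaD map_cat flatten_cat /= cats0. Qed.

Lemma size_blocks B n : size (blocks B n) = (n * size B)%N.
Proof. by elim: n => // n IH; rewrite blocksS size_cat IH size_map mulSn addnC. Qed.

Lemma free_mod_blocks B n : free_mod fD ID B -> free_mod fQ IQ (blocks B n).
Proof.
move=> free_B; elim: n => [|n IH]; first by move=> c _ i.
rewrite blocksS; apply: free_mod_cat IH _ => c1 c2 /(psi_ideal n).
rewrite psiD !psi_lincomb.
have /all_pred1P -> : all (pred1 0) (map (psi n) (blocks B n)).
  apply/allP => _ /mapP [_ /flatten_mapP [i]] /[!mem_iota] /andP [_ ni] /mapP [b _ ->] ->.
  by rewrite /= psi_monomial gtn_eqF.
have -> : map (psi n) [seq b%:P%:P * polyx D ^+ n | b <- B] = B.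
  by rewrite -map_comp -[RHS]map_id; apply: eq_map => b /=; rewrite psi_monomial eqxx.
by rewrite lincomb_nseq0 add0r size_map; exact: free_B.
Qed.

Lemma dim_quot_ge s n :
  (n * dim_span_mod fD ID (words_upto s n) <=
   dim_span_mod fQ IQ (words_upto (polyx D :: map (polyC \o polyC) s) (2 * n)))%N.
Proof.
have [B [free_B <- Bs _]] := dim_span_modP ID0 ID_lin (words_upto s n).
rewrite -size_blocks; apply: (dim_span_mod_ge IQ0 IQ_lin (free_mod_blocks (n := n) free_B)).
move=> _ /flatten_mapP [i] /[!mem_iota] /andP [_ ni] /mapP [b /Bs bw ->].
have [l ln bl] := words_uptoP _ _ _ bw.
apply: (span_mod_mem _ IQ0); apply: (mem_words_upto (l := l + i)); first lia.
apply: mem_wordsM; last exact/mem_wordsX/mem_head.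
apply: words_subset (map_words (polyC \o polyC : {rmorphism D -> PP}) bl) => u us.
by rewrite inE us orbT.
Qed.

Definition mon i j : PP := polyx D ^+ i * polyy D ^+ j.

Lemma mon_comm i j q : GRing.comm (mon i j) q.
Proof.
apply/commr_sym/commrM; apply/commrX/commr_sym; [exact: polyx_comm | exact: polyy_comm].
Qed.

Lemma monM i1 j1 i2 j2 : mon i1 j1 * mon i2 j2 = mon (i1 + i2) (j1 + j2).
Proof.
have yx : GRing.comm (polyy D ^+ j1) (polyx D ^+ i2).
  by apply/commrX/commr_sym/commrX/polyx_comm.
by rewrite /mon -mulrA (mulrA (polyy D ^+ j1)) yx -!mulrA -exprD mulrA -exprD.
Qed.

Lemma mon_diag m : mon m m = (polyx D * polyy D) ^+ m.
Proof. by rewrite /mon exprMn_comm //; exact: polyx_comm. Qed.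

Lemma polyCC_lincombM c G (M : PP) :
  (lincomb fD c G)%:P%:P * M = lincomb fQ c [seq u%:P%:P * M | u <- G].
Proof.
rewrite /lincomb size_map !rmorph_sum mulr_suml; apply: eq_bigr => i _.
by rewrite (nth_map 0) // !rmorphM mulrA.
Qed.

Definition corner_exps T : seq (nat * nat) :=
  [seq (i, 0%N) | i <- iota 0 T.+1] ++ [seq (0%N, j) | j <- iota 0 T.+1].

Definition corner_family (G : seq D) T : seq PP :=
  [seq u%:P%:P * mon ij.1 ij.2 | u <- G, ij <- corner_exps T].

Lemma size_corner_family G T : size (corner_family G T) = (size G * (2 * T.+1))%N.
Proof. by rewrite size_allpairs size_cat !size_map size_iota mul2n addnn. Qed.

Lemma corner_expsP i j T : (i <= T)%N -> (j <= T)%N ->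
  (i - minn i j, j - minn i j)%N \in corner_exps T.
Proof.
move=> iT jT; rewrite mem_cat; case: (leqP i j) => ij.
  by rewrite subnn; apply/orP; right; apply/mapP; exists (j - i)%N; rewrite // mem_iota; lia.
by rewrite subnn; apply/orP; left; apply/mapP; exists (i - j)%N; rewrite // mem_iota; lia.
Qed.

Section UpperBound.
Variable s' : seq PP.

Definition coef_gens : seq D :=
  a :: flatten [seq flatten [seq polyseq q | q <- polyseq p] | p <- s'].

Definition deg_bound : nat := \max_(p <- s') maxn (size p) (\max_(q <- polyseq p) size q).

Lemma size_le_deg_bound p : p \in s' -> (size p <= deg_bound)%N.
Proof. by move=> ps; apply: leq_trans (leq_bigmax_seq _ ps isT); exact: leq_maxl. Qed.

Lemma size_coef_le_deg_bound p j : p \in s' -> (size (p`_j)%R <= deg_bound)%N.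
Proof.
move=> ps; case: (ltnP j (size p)) => jp; last by rewrite nth_default ?size_poly0.
apply: leq_trans (leq_bigmax_seq _ ps isT); apply: leq_trans (leq_maxr _ _).
exact: (leq_bigmax_seq _ (mem_nth 0 jp) isT).
Qed.

Lemma coef_gens_coef p j i : p \in s' -> (j < size p)%N -> (i < size (p`_j)%R)%N ->
  (p`_j)`_i \in coef_gens.
Proof.
move=> ps jp ij; rewrite inE; apply/orP; right; apply/flatten_mapP; exists p => //.
by apply/flatten_mapP; exists p`_j; apply: mem_nth.
Qed.

Definition small_monomial l (u : PP) : Prop := exists w i j,
  [/\ w \in words coef_gens l, (i <= l * deg_bound)%N, (j <= l * deg_bound)%N
    & u = w%:P%:P * mon i j].

Lemma sum_of_small_monomials1 p : p \in s' -> sum_of (small_monomial 1) p.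
Proof.
move=> ps; rewrite [p]poly_expand; apply: sum_of_sum => j _.
rewrite [p`_j]poly_expand rmorph_sum mulr_suml; apply: sum_of_sum => i _.
apply: sum_of_id; exists ((p`_j)`_i * 1), i, j; split.
- by apply: mem_wordsS; [exact: coef_gens_coef | rewrite inE].
- by rewrite mul1n; apply: leq_trans (size_coef_le_deg_bound j ps); exact: ltnW.
- by rewrite mul1n; apply: leq_trans (size_le_deg_bound ps); exact: ltnW.
by rewrite mulr1 /mon !rmorphM rmorphXn mulrA.
Qed.

Lemma words_sum_of l z : z \in words s' l -> sum_of (small_monomial l) z.
Proof.
elim: l z => [|l IH] z.
  rewrite inE => /eqP ->; apply: sum_of_id; exists 1, 0%N, 0%N; split => //.
    by rewrite inE.
  by rewrite /mon !expr0 !mulr1 rmorph1.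
move=> /wordsSP [p [z' [ps z'w ->]]].
apply: sum_ofM (sum_of_small_monomials1 ps) (IH _ z'w) _.
move=> _ _ [w1 [i1 [j1 [w1w i1K j1K ->]]]] [w2 [i2 [j2 [w2w i2K j2K ->]]]].
exists (w1 * w2), (i1 + i2)%N, (j1 + j2)%N; split.
- by rewrite -add1n; apply: mem_wordsM.
- by rewrite mulSn leq_add // -[deg_bound]mul1n.
- by rewrite mulSn leq_add // -[deg_bound]mul1n.
have -> : w1%:P%:P * mon i1 j1 * (w2%:P%:P * mon i2 j2) =
    w1%:P%:P * (w2%:P%:P * mon i1 j1) * mon i2 j2.
  by rewrite -(mon_comm i1 j1 w2%:P%:P) !mulrA.
by rewrite -monM !polyCM !mulrA.
Qed.

Lemma span_small_monomial G n l u :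
  (forall d, d \in words_upto coef_gens (n * deg_bound.+1) -> span_mod fD ID G d) ->
  (l <= n)%N -> small_monomial l u ->
  span_mod fQ IQ (corner_family G (n * deg_bound)) u.
Proof.
move=> G_span ln [w [i [j [wl iK jK ->]]]]; set m := minn i j.
have lK : (l * deg_bound <= n * deg_bound)%N by rewrite leq_mul2r ln orbT.
have reduce : IQ (w%:P%:P * mon i j - (w * a ^+ m)%:P%:P * mon (i - m) (j - m)).
  have -> : (w * a ^+ m)%:P%:P * mon (i - m) (j - m) =
      w%:P%:P * mon (i - m) (j - m) * a%:P%:P ^+ m.
    by rewrite !rmorphM !rmorphXn -[RHS]mulrA mon_comm [RHS]mulrA.
  have -> : mon i j = mon (i - m) (j - m) * (polyx D * polyy D) ^+ m.
    by rewrite -mon_diag monM !subnK ?geq_minl ?geq_minr.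
  by rewrite mulrA -mulrBr; apply/ideal_genMl/ideal_gen_subX.
apply: (span_mod_eqmod IQ_lin reduce).
have [c /eqP] : span_mod fD ID G (w * a ^+ m).
  apply/G_span/(mem_words_upto (l := l + m)); last exact/mem_wordsM/mem_wordsX/mem_head.
  by rewrite mulnS leq_add // (leq_trans (geq_minl i j)) // (leq_trans iK).
rewrite subr_eq0 => /eqP ->; rewrite polyCC_lincombM.
apply: (span_mod_trans IQ0 IQ_lin _ (span_mod_lincomb _ IQ0 c _)) => _ /mapP [g gG ->].
apply: (span_mod_mem _ IQ0).
apply/allpairsP; exists (g, (i - m, j - m))%N; split => //.
by apply: corner_expsP; apply: leq_trans lK.
Qed.

Lemma dim_quot_le n :
  (dim_span_mod fQ IQ (words_upto s' n) <=
   dim_span_mod fD ID (words_upto coef_gens (n * deg_bound.+1)) * (2 * (n * deg_bound).+1))%N.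
Proof.
have [B [_ <- _ B_span]] :=
  dim_span_modP ID0 ID_lin (words_upto coef_gens (n * deg_bound.+1)).
rewrite -size_corner_family; apply: (dim_span_mod_le IQ0 IQ_lin) => z /words_uptoP [l ln].
move=> /words_sum_of [zs zsS ->]; rewrite big_seq; apply: (span_mod_sum IQ0 IQ_lin) => u /zsS.
exact: span_small_monomial.
Qed.

End UpperBound.

Section GKComparison.
Variable R : realType.

Lemma gk_quot_ge s : (limn_esup (gk_term R fD ID s) + 1%:E <=
  limn_esup (gk_term R fQ IQ (polyx D :: map (polyC \o polyC) s)))%E.
Proof.
apply: (@limn_esup_gk_ratio_ge R _ _ 2) => // n.
  exact: dim_words_upto_gt0.
exact: dim_quot_ge.
Qed.

Lemma gk_quot_le s' : (limn_esup (gk_term R fQ IQ s') <=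
  limn_esup (gk_term R fD ID (coef_gens s')) + 1%:E)%E.
Proof.
apply: (@limn_esup_gk_ratio_le R _ _ (deg_bound s').+1 (2 * (deg_bound s').+1)) => // n n0.
rewrite [((deg_bound s').+1 * n)%N]mulnC; apply: leq_trans (dim_quot_le s' n) _.
by rewrite leq_mul2l; apply/orP; right; nia.
Qed.

End GKComparison.

End QuotientXY.

Theorem corollary3p3 (R : realType) (k : fieldType) (D : algType k) (a : D)
  (a_central : forall d : D, a * d = d * a) :
  GKdim_Dxy_mod R a = (GKdim R D + 1%:E)%E.
Proof.
rewrite /GKdim_Dxy_mod /GKdim /GKdim_quot ereal_sup_range_adde.
apply/eqP; rewrite eq_le; apply/andP; split; apply: ereal_sup_le_range.
  by move=> s'; exists (coef_gens a s'); exact: gk_quot_le.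
by move=> s; exists (polyx D :: map (polyC \o polyC) s); exact: (gk_quot_ge a_central).
Qed.
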